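(* Let $X$ be a topological space in which every $\Lambda$-set is a $G_\delta$-set, and suppose that for each pair of disjoint $G_\delta$-sets $G_0,G_1$ in $X$ there exist $F_\sigma$-sets $F_0,F_1$ with $G_0\subseteq F_0$, $G_1\subseteq F_1$ and $F_0\cap F_1=\varnothing$. Let $g,f:X\to\mathbb{R}$ be functions such that $f$ is lower semi-Baire-one, $g$ is upper semi-Baire-one, and $g\le f$. Then there exists a Baire-one function $h:X\to\mathbb{R}$ such that $g\le h\le f$.
   Context: A $\Lambda$-set in $X$ is an intersection of open sets. A function $f:X\to\mathbb{R}$ is upper semi-Baire-one (resp. lower semi-Baire-one) if $f^{-1}(-\infty,t)$ (resp. $f^{-1}(t,+\infty)$) is an $F_\sigma$-set in $X$ for every real $t$. A function $h:X\to\mathbb{R}$ is Baire-one if the preimage of every open subset of $\mathbb{R}$ is an $F_\sigma$-set in $X$. $g\le f$ means $g(x)\le f(x)$ for all $x\in X$. *)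

From HB Require Import structures.
From mathcomp Require Import all_boot all_order all_algebra.
From mathcomp Require Import boolp classical_sets functions reals topology normedtype borel_hierarchy.
Set Implicit Arguments. Unset Strict Implicit. Unset Printing Implicit Defensive.
Import Order.TTheory GRing.Theory Num.Theory.
Import numFieldNormedType.Exports.
Local Open Scope classical_set_scope.
Local Open Scope ring_scope.

Definition Lambda_set {T : topologicalType} (A : set T) :=
  exists U : set (set T), (forall V, U V -> open V) /\ A = \bigcap_(V in U) V.

Definition upper_semi_Baire_one {T : topologicalType} {R : realType} (f : T -> R) :=
  forall t : R, Fsigma (f @^-1` [set x | x < t]).

Definition lower_semi_Baire_one {T : topologicalType} {R : realType} (f : T -> R) :=
  forall t : R, Fsigma (f @^-1` [set x | t < x]).

Definition Baire_one {T : topologicalType} {R : realType} (h : T -> R) :=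
  forall U : set R, open U -> Fsigma (h @^-1` U).

(* Enumerate the rationals as (q_n).  By the separation property, a G_delta set
   C contained in an F_sigma set D can be interpolated as C <= U <= V <= D with
   U F_sigma and V G_delta.  Interpolating recursively between
     C_n = {f <= q_n} \/ \bigcup {V_i | i < n, q_i < q_n}  and
     D_n = {g < q_n + delta} /\ \bigcap {U_i | i < n, q_n < q_i}
   gives q_i < q_j -> V_i <= U_j, so h x = inf {q_n | x \in U_n} satisfies
   g - delta <= h <= f, and {h < t}, {h > t} are unions of the U_n and of the
   complements of the V_n: h is Baire-one.  Applying this approximate insertion
   with delta = 1/(n+1) to the successively squeezed pairs
   max (g_n, h_n - delta) <= min (f_n, h_n + delta) yields Baire-one h_n
   converging uniformly to sup_n g_n, which lies between g and f. *)

From HB Require Import structures.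
From mathcomp Require Import all_boot all_order all_algebra.
From mathcomp Require Import boolp classical_sets functions cardinality reals.
From mathcomp Require Import topology normedtype borel_hierarchy lra.
Import Order.TTheory GRing.Theory Num.Theory.
Import numFieldNormedType.Exports.
Local Open Scope classical_set_scope.
Local Open Scope ring_scope.

Section Fsigma_Gdelta.
Context {T : topologicalType}.

Lemma Fsigma_bigcup_closed (I : countType) (F : I -> set T) :
  (forall i, closed (F i)) -> Fsigma (\bigcup_i F i).
Proof.
move=> cF; exists (fun n => if unpickle n is Some i then F i else set0).
  by move=> n; case: unpickle => [i|]; [exact: cF | exact: closed0].
apply/seteqP; split=> [x [i _ Fix]|x [n _]].
  by exists (pickle i) => //; rewrite pickleK.
by case: unpickle => // i Fix; exists i.
Qed.

Lemma Fsigma_bigcup (I : countType) (P : set I) (F : I -> set T) :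
  (forall i, P i -> Fsigma (F i)) -> Fsigma (\bigcup_(i in P) F i).
Proof.
move=> FF; have /choice[G GF] : forall i, exists G : nat -> set T,
    (forall n, closed (G n)) /\ (if i \in P then F i else set0) = \bigcup_n G n.
  move=> i; case: ifPn => [/set_mem/FF[G cG ->]|_]; first by exists G.
  by exists (fun=> set0); rewrite bigcup0//; split=> // _; exact: closed0.
rewrite bigcup_mkcond (eq_bigcupr (fun i _ => (GF i).2)) -bigcup_setX setXTT.
by apply: Fsigma_bigcup_closed => -[i n]; exact: (GF i).1.
Qed.

Lemma Fsigma_setI (A B : set T) : Fsigma A -> Fsigma B -> Fsigma (A `&` B).
Proof.
move=> [F cF ->] [G cG ->]; rewrite setI_bigcupl.
apply: Fsigma_bigcup => i _; rewrite setI_bigcupr.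
by apply: Fsigma_bigcup_closed => j; exact: closedI.
Qed.

Lemma Fsigma_bigcap_finite (I : choiceType) (P : set I) (F : I -> set T) :
  finite_set P -> (forall i, P i -> Fsigma (F i)) -> Fsigma (\bigcap_(i in P) F i).
Proof.
move=> /finite_seqP[s ->] FF; rewrite bigcap_seq big_seq.
apply: big_ind => [|A B|i /FF//]; last exact: Fsigma_setI.
exact/closed_Fsigma/closedT.
Qed.

Lemma Fsigma_setC {A : set T} : Gdelta A -> Fsigma (~` A).
Proof.
move=> [G oG ->]; rewrite setC_bigcap.
by exists (fun n => ~` G n) => // n; rewrite closedC.
Qed.

Lemma Gdelta_setC {A : set T} : Fsigma A -> Gdelta (~` A).
Proof.
move=> [F cF ->]; rewrite setC_bigcup.
by exists (fun n => ~` F n) => // n; rewrite openC.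
Qed.

Lemma Gdelta_setU (A B : set T) : Gdelta A -> Gdelta B -> Gdelta (A `|` B).
Proof.
move=> GA GB; rewrite -[_ `|` _]setCK setCU; apply: Gdelta_setC.
by apply: Fsigma_setI; exact: Fsigma_setC.
Qed.

Lemma Gdelta_bigcup_finite (I : choiceType) (P : set I) (G : I -> set T) :
  finite_set P -> (forall i, P i -> Gdelta (G i)) -> Gdelta (\bigcup_(i in P) G i).
Proof.
move=> finP GG; rewrite -[\bigcup_(i in P) _]setCK setC_bigcup; apply: Gdelta_setC.
by apply: Fsigma_bigcap_finite => // i /GG; exact: Fsigma_setC.
Qed.

End Fsigma_Gdelta.

Section semi_Baire_one.
Context {X : topologicalType} {R : realType}.
Implicit Types (h u v : X -> R).

Lemma Baire_one_upper h : Baire_one h -> upper_semi_Baire_one h.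
Proof. by move=> hB t; apply: hB; exact: open_lt. Qed.

Lemma Baire_one_lower h : Baire_one h -> lower_semi_Baire_one h.
Proof. by move=> hB t; apply: hB; exact: open_gt. Qed.

Lemma upper_semi_Baire_oneD h c :
  upper_semi_Baire_one h -> upper_semi_Baire_one (fun x => h x + c).
Proof.
move=> hU t; have -> : (fun x => h x + c) @^-1` [set y | y < t] =
    h @^-1` [set y | y < t - c] by apply/seteqP; split=> x /=; rewrite ltrBrDr.
exact: hU.
Qed.

Lemma lower_semi_Baire_oneD h c :
  lower_semi_Baire_one h -> lower_semi_Baire_one (fun x => h x + c).
Proof.
move=> hL t; have -> : (fun x => h x + c) @^-1` [set y | t < y] =
    h @^-1` [set y | t - c < y] by apply/seteqP; split=> x /=; rewrite ltrBlDr.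
exact: hL.
Qed.

Lemma upper_semi_Baire_one_max u v : upper_semi_Baire_one u ->
  upper_semi_Baire_one v -> upper_semi_Baire_one (fun x => Num.max (u x) (v x)).
Proof.
move=> uU vU t; have -> : (fun x => Num.max (u x) (v x)) @^-1` [set y | y < t] =
    u @^-1` [set y | y < t] `&` v @^-1` [set y | y < t].
  by apply/seteqP; split=> x /=; rewrite gt_max => /andP.
exact: Fsigma_setI.
Qed.

Lemma lower_semi_Baire_one_min u v : lower_semi_Baire_one u ->
  lower_semi_Baire_one v -> lower_semi_Baire_one (fun x => Num.min (u x) (v x)).
Proof.
move=> uL vL t; have -> : (fun x => Num.min (u x) (v x)) @^-1` [set y | t < y] =
    u @^-1` [set y | t < y] `&` v @^-1` [set y | t < y].
  by apply/seteqP; split=> x /=; rewrite lt_min => /andP.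
exact: Fsigma_setI.
Qed.

Lemma semi_Baire_one_Baire_one h :
  upper_semi_Baire_one h -> lower_semi_Baire_one h -> Baire_one h.
Proof.
move=> hU hL U oU.
have -> : h @^-1` U = \bigcup_(p in [set p : rat * rat |
      [set y | ratr p.1 < y < ratr p.2] `<=` U])
    (h @^-1` [set y | ratr p.1 < y] `&` h @^-1` [set y | y < ratr p.2]).
  apply/seteqP; split=> [x Uhx|x [p pU [/= p1 p2]]]; last by apply: pU; apply/andP.
  have /nbhs_ballP[e /= e0 eU] := oU _ Uhx.
  have [a] : exists a : rat, ratr a \in `](h x - e), h x[.
    by apply: rat_in_itvoo; rewrite ltrBlDr ltrDl.
  have [b] : exists b : rat, ratr b \in `](h x), h x + e[.
    by apply: rat_in_itvoo; rewrite ltrDl.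
  rewrite !in_itv /= => /andP[xb be] /andP[ea ax].
  exists (a, b) => //= y /andP[ay yb]; apply: eU.
  by rewrite /ball /= ltr_distlC; apply/andP; split; lra.
by apply: Fsigma_bigcup => p _; exact: Fsigma_setI.
Qed.

Lemma Baire_one_uniform_limit (h : nat -> X -> R) (d : nat -> R) (H : X -> R) :
  (forall e, 0 < e -> exists n, d n < e) ->
  (forall n x, `|H x - h n x| <= d n) ->
  (forall n, Baire_one (h n)) -> Baire_one H.
Proof.
move=> d_small Hh hB.
have {}Hh n x : h n x - d n <= H x <= h n x + d n by rewrite -ler_distl.
apply: semi_Baire_one_Baire_one => t.
- have -> : H @^-1` [set y | y < t] = \bigcup_n h n @^-1` [set y | y < t - d n].
    apply/seteqP; split=> [x /= Hxt|x [n _ /=]]; last by have := Hh n x; lra.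
    have [|n dn] := d_small ((t - H x) / 2); first lra.
    by exists n => //=; have := Hh n x; lra.
  by apply: Fsigma_bigcup => n _; exact/Baire_one_upper.
- have -> : H @^-1` [set y | t < y] = \bigcup_n h n @^-1` [set y | t + d n < y].
    apply/seteqP; split=> [x /= Hxt|x [n _ /=]]; last by have := Hh n x; lra.
    have [|n dn] := d_small ((H x - t) / 2); first lra.
    by exists n => //=; have := Hh n x; lra.
  by apply: Fsigma_bigcup => n _; exact/Baire_one_lower.
Qed.

End semi_Baire_one.

Section strong_recursion.
Context {A : Type} (a0 : A) (next : (nat -> A) -> nat -> A).

Fixpoint strong_rec_prefix m : nat -> A :=
  if m is m'.+1 then fun k =>
    if k == m' then next (strong_rec_prefix m') m' else strong_rec_prefix m' k
  else fun=> a0.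

Definition strong_rec n := strong_rec_prefix n.+1 n.

Lemma strong_rec_prefixE m k : (k < m)%N -> strong_rec_prefix m k = strong_rec k.
Proof.
elim: m => // m IH; rewrite ltnS leq_eqVlt => /predU1P[->|km] //=.
by rewrite ltn_eqF // IH.
Qed.

Lemma strong_recE n : strong_rec n = next (strong_rec_prefix n) n.
Proof. by rewrite /strong_rec /= eqxx. Qed.

End strong_recursion.

Lemma strong_dependent_choice (A : Type) (a0 : A) (P : (nat -> A) -> nat -> A -> Prop) :
  (forall w w' n a, (forall i, (i < n)%N -> w i = w' i) -> P w n a -> P w' n a) ->
  (forall w n, (forall i, (i < n)%N -> P w i (w i)) -> exists a, P w n a) ->
  exists w, forall n, P w n (w n).
Proof.
move=> P_local P_next.
have /choice[next nextP] : forall wn : (nat -> A) * nat, exists a,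
    (forall i, (i < wn.2)%N -> P wn.1 i (wn.1 i)) -> P wn.1 wn.2 a.
  move=> [w n]; have [/P_next[a Pa]|Pw] := pselect (forall i, (i < n)%N -> P w i (w i)).
    by exists a.
  by exists a0 => /Pw.
pose w := strong_rec a0 (fun w n => next (w, n)).
exists w; elim/ltn_ind => n IH; rewrite [w n]strong_recE.
apply: (P_local _ _ _ _ (strong_rec_prefixE _ _ n)).
apply: (nextP (_, n)) => i ilt /=; rewrite strong_rec_prefixE //.
apply: P_local (IH i ilt) => j jlt; rewrite strong_rec_prefixE //.
exact: ltn_trans ilt.
Qed.

Definition rat_enum {R : realType} (n : nat) : R := ratr (odflt 0 (unpickle n)).

Lemma rat_enum_between {R : realType} {a b : R} :
  a < b -> exists n, a < rat_enum n < b.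
Proof.
move=> /rat_in_itvoo[r]; rewrite in_itv /= => arb.
by exists (pickle r); rewrite /rat_enum pickleK.
Qed.

Definition Fsigma_separation (X : topologicalType) :=
  forall G0 G1 : set X, Gdelta G0 -> Gdelta G1 -> G0 `&` G1 = set0 ->
    exists F0 F1 : set X,
      [/\ Fsigma F0, Fsigma F1, G0 `<=` F0, G1 `<=` F1 & F0 `&` F1 = set0].

Definition interpolant {X : topologicalType} (C D : set X) (UV : set X * set X) :=
  [/\ Fsigma UV.1, Gdelta UV.2, C `<=` UV.1, UV.1 `<=` UV.2 & UV.2 `<=` D].

Lemma Gdelta_Fsigma_interpolation (X : topologicalType) (C D : set X) :
  Fsigma_separation X -> Gdelta C -> Fsigma D -> C `<=` D ->
  exists UV, interpolant C D UV.
Proof.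
move=> sepX GC FD /subsets_disjoint CD.
have [F0 [F1 [FF0 FF1 CF0 DF1 /disjoints_subset F01]]] :=
  sepX _ _ GC (Gdelta_setC FD) CD.
exists (F0, ~` F1); split=> //=; first exact: Gdelta_setC.
by rewrite -[D]setCK; exact: subsetC.
Qed.

Section approximate_insertion.
Context {X : topologicalType} {R : realType}.
Hypothesis sepX : Fsigma_separation X.
Variables (g f : X -> R) (delta : R).
Hypotheses (gU : upper_semi_Baire_one g) (fL : lower_semi_Baire_one f).
Hypotheses (g_le_f : forall x, g x <= f x) (delta_gt0 : 0 < delta).

Local Notation q := (@rat_enum R).

Definition inner (W : nat -> set X * set X) n : set X :=
  [set x | f x <= q n] `|`
  \bigcup_(i in [set i | (i < n)%N && (q i < q n)]) (W i).2.

Definition outer (W : nat -> set X * set X) n : set X :=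
  [set x | g x < q n + delta] `&`
  \bigcap_(i in [set i | (i < n)%N && (q n < q i)]) (W i).1.

Definition admissible W n UV := interpolant (inner W n) (outer W n) UV.

Lemma admissible_local W W' n UV : (forall i, (i < n)%N -> W i = W' i) ->
  admissible W n UV -> admissible W' n UV.
Proof.
move=> WW'; rewrite /admissible.
suff [-> ->] : inner W n = inner W' n /\ outer W n = outer W' n by [].
split; [congr (_ `|` _); apply: eq_bigcupr | congr (_ `&` _); apply: eq_bigcapr];
  by move=> i /andP[/WW' ->].
Qed.

Lemma admissible_chain {W i j} : admissible W i (W i) -> admissible W j (W j) ->
  q i < q j -> (W i).2 `<=` (W j).1.
Proof.
move=> [_ _ _ _ Wi_outer] [_ _ Wj_inner _ _] qij x Wix.
have [ij|ji|eij] := ltngtP i j; last by rewrite eij ltxx in qij.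
- by apply: Wj_inner; right; exists i => //; apply/andP.
- by have [_] := Wi_outer x Wix; apply; apply/andP.
Qed.

Lemma admissible_next W n : (forall i, (i < n)%N -> admissible W i (W i)) ->
  exists UV, admissible W n UV.
Proof.
move=> Wadm; have sub_In (p : nat -> bool) : [set i | (i < n)%N && p i] `<=` `I_n.
  by move=> i /andP[].
apply: Gdelta_Fsigma_interpolation => //.
- apply: Gdelta_setU.
    have -> : [set x | f x <= q n] = ~` (f @^-1` [set y | q n < y]).
      by apply/seteqP; split=> x /=; rewrite leNgt => /negP.
    exact/Gdelta_setC/fL.
  apply: Gdelta_bigcup_finite => [|i /andP[/Wadm[]//]].
  exact: sub_finite_set (sub_In _) (finite_II n).
- apply: Fsigma_setI; first exact: gU.
  apply: Fsigma_bigcap_finite => [|i /andP[/Wadm[]//]].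
  exact: sub_finite_set (sub_In _) (finite_II n).
move=> x [/= fx|[i /andP[ilt qi] Wix]]; split=> /=.
- by rewrite (le_lt_trans (g_le_f x)) // (le_lt_trans fx) // ltrDl.
- move=> j /andP[jlt qj]; have [_ _ Wj_inner _ _] := Wadm j jlt.
  by apply: Wj_inner; left; rewrite /= (le_trans fx) ?ltW.
- by have [_ _ _ _ /(_ x Wix)[/= gx _]] := Wadm i ilt; lra.
- move=> j /andP[jlt qj].
  exact: admissible_chain (Wadm i ilt) (Wadm j jlt) (lt_trans qi qj) x Wix.
Qed.

Lemma admissible_seq : exists W, forall n, admissible W n (W n).
Proof.
exact: strong_dependent_choice (set0, set0) _ admissible_local admissible_next.
Qed.

Section inserted.
Variable W : nat -> set X * set X.
Hypothesis W_adm : forall n, admissible W n (W n).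

Definition levels x : set R := q @` [set n | (W n).1 x].

Definition inserted x : R := inf (levels x).

Lemma W_chain {m n} : q m < q n -> (W m).2 `<=` (W n).1.
Proof. exact: admissible_chain. Qed.

Lemma W1_of_f_le {x n} : f x <= q n -> (W n).1 x.
Proof. by move=> fx; have [_ _ Wn_inner _ _] := W_adm n; apply: Wn_inner; left. Qed.

Lemma lt_of_W1 {x n} : (W n).1 x -> g x - delta < q n.
Proof.
move=> Wnx; have [_ _ _ Wn12 /(_ x (Wn12 x Wnx))[/= gx _]] := W_adm n; lra.
Qed.

Lemma levels_neq0 x : levels x !=set0.
Proof.
have [|n /andP[fn _]] := @rat_enum_between R (f x) (f x + 1); first lra.
by exists (q n), n => //; exact/W1_of_f_le/ltW.
Qed.

Lemma levels_lbound x : has_lbound (levels x).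
Proof. by exists (g x - delta) => _ [n /lt_of_W1/ltW + <-]. Qed.

Lemma inserted_le {n x} : (W n).1 x -> inserted x <= q n.
Proof. by move=> Wnx; apply: ge_inf; [exact: levels_lbound | exists n]. Qed.

Lemma inserted_le_f x : inserted x <= f x.
Proof.
rewrite leNgt; apply/negP => /rat_enum_between[n /andP[fn nI]].
by have := inserted_le (W1_of_f_le (ltW fn)); rewrite leNgt nI.
Qed.

Lemma inserted_ge x : g x - delta <= inserted x.
Proof.
by apply: lb_le_inf; [exact: levels_neq0 | move=> _ [n /lt_of_W1/ltW + <-]].
Qed.

Lemma inserted_lt t :
  inserted @^-1` [set y | y < t] = \bigcup_(n in [set n | q n < t]) (W n).1.
Proof.
apply/seteqP; split=> [x /= /(inf_lt (levels_neq0 x))[_ [n Wnx <-] nt]|x [n /= nt]].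
  by exists n.
by move=> Wnx; exact: le_lt_trans (inserted_le Wnx) nt.
Qed.

Lemma inserted_gt t :
  inserted @^-1` [set y | t < y] = \bigcup_(n in [set n | t < q n]) ~` (W n).2.
Proof.
apply/seteqP; split=> [x /= tI|x [n /= tn Wnx]].
  have [m /andP[tm mI]] := rat_enum_between tI.
  have [n /andP[mn nI]] := rat_enum_between mI.
  exists m => // Wmx; have := inserted_le (W_chain mn _ Wmx).
  by rewrite leNgt nI.
apply: (lt_le_trans tn); apply: lb_le_inf; first exact: levels_neq0.
move=> _ [m Wmx <-]; rewrite leNgt; apply/negP => mn; apply: Wnx.
have [_ _ _ Wm12 _] := W_adm m; have [_ _ _ Wn12 _] := W_adm n.
exact/Wn12/(W_chain mn)/Wm12.
Qed.

Lemma inserted_Baire_one : Baire_one inserted.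
Proof.
apply: semi_Baire_one_Baire_one => t; [rewrite inserted_lt | rewrite inserted_gt].
  by apply: Fsigma_bigcup => n _; have [] := W_adm n.
by apply: Fsigma_bigcup => n _; apply: Fsigma_setC; have [] := W_adm n.
Qed.

End inserted.

Lemma approximate_insertion :
  exists h, Baire_one h /\ forall x, g x - delta <= h x <= f x.
Proof.
have [W W_adm] := admissible_seq; exists (inserted W); split.
  exact: inserted_Baire_one.
by move=> x; rewrite inserted_ge ?inserted_le_f.
Qed.

End approximate_insertion.

Section exact_insertion.
Context {X : topologicalType} {R : realType}.

Definition insertable (lo up : X -> R) :=
  [/\ upper_semi_Baire_one lo, lower_semi_Baire_one up & forall x, lo x <= up x].

Variable insert : (X -> R) -> (X -> R) -> R -> X -> R.
Hypothesis insertP : forall {lo up d}, insertable lo up -> 0 < d ->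
  Baire_one (insert lo up d) /\ forall x, lo x - d <= insert lo up d x <= up x.
Variables (g f : X -> R).

Definition err n : R := n.+1%:R^-1.

Fixpoint bounds n : (X -> R) * (X -> R) :=
  if n is m.+1 then
    let h := insert (bounds m).1 (bounds m).2 (err m) in
    (fun x => Num.max ((bounds m).1 x) (h x - err m),
     fun x => Num.min ((bounds m).2 x) (h x + err m))
  else (g, f).

Local Notation lo n := (bounds n).1.
Local Notation up n := (bounds n).2.
Definition approx n := insert (lo n) (up n) (err n).

Hypothesis gf_insertable : insertable g f.

Lemma err_gt0 n : 0 < err n.
Proof. by rewrite invr_gt0 ltr0Sn. Qed.

Lemma bounds_insertable n : insertable (lo n) (up n).
Proof.
elim: n => // n ins_n; have [aB aP] := insertP ins_n (err_gt0 n).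
have [loU upL lo_up] := ins_n; split=> /=.
- apply: upper_semi_Baire_one_max => //.
  exact/upper_semi_Baire_oneD/Baire_one_upper.
- apply: lower_semi_Baire_one_min => //.
  exact/lower_semi_Baire_oneD/Baire_one_lower.
- move=> x; have := lo_up x; have := aP x; have := err_gt0 n.
  rewrite ge_max !le_min; move: (err n) (approx n x) => e a; lra.
Qed.

Lemma approxP n : Baire_one (approx n) /\
  forall x, lo n x - err n <= approx n x <= up n x.
Proof. exact/insertP/err_gt0/bounds_insertable. Qed.

Lemma lo_le x : {homo (fun n => lo n x) : n m / (n <= m)%N >-> n <= m}.
Proof.
apply: (homo_leq (r := fun a b => a <= b)) => [|b a c|k /=].
- exact: lexx.
- exact: le_trans.
- by rewrite le_max lexx.
Qed.

Lemma up_le x : {homo (fun n => up n x) : n m / (n <= m)%N >-> m <= n}.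
Proof.
apply: (homo_leq (r := fun a b => b <= a)) => [|b a c ba cb|k /=].
- exact: lexx.
- exact: le_trans cb ba.
- by rewrite ge_min lexx.
Qed.

Lemma lo_le_up n m x : lo n x <= up m x.
Proof.
have [_ _ lo_up] := bounds_insertable (maxn n m).
apply: le_trans (lo_le x _ _ (leq_maxl n m)) _.
exact: le_trans (lo_up x) (up_le x _ _ (leq_maxr n m)).
Qed.

Definition limit x : R := sup (range (fun n => lo n x)).

Lemma limit_between n x : lo n x <= limit x <= up n x.
Proof.
apply/andP; split.
  by apply: ub_le_sup; [exists (up 0 x) => _ [m _ <-]; exact: lo_le_up | exists n].
by apply: ge_sup; [exists (lo 0 x), 0%N | move=> _ [m _ <-]; exact: lo_le_up].
Qed.

Lemma limit_approx n x : `|limit x - approx n x| <= err n.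
Proof.
rewrite ler_distl; have /andP[+ _] := limit_between n.+1 x.
have /andP[_ +] := limit_between n.+1 x.
by rewrite /= ge_max le_min => /andP[_ ->] /andP[_ ->].
Qed.

Lemma limit_Baire_one : Baire_one limit.
Proof.
apply: (Baire_one_uniform_limit approx err) => [e /ltr_add_invr[n]|n x|n].
- by rewrite add0r; exists n.
- exact: limit_approx.
- by have [] := approxP n.
Qed.

End exact_insertion.

Lemma exact_insertion {X : topologicalType} {R : realType} :
  (forall (lo up : X -> R) (d : R), insertable lo up -> 0 < d ->
     exists h, Baire_one h /\ forall x, lo x - d <= h x <= up x) ->
  forall g f : X -> R, insertable g f ->
    exists h, Baire_one h /\ forall x, g x <= h x <= f x.
Proof.
move=> approx_ins g f gf.
have /choice[ins insP] : forall p : (X -> R) * (X -> R) * R, exists h,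
    insertable p.1.1 p.1.2 -> 0 < p.2 ->
    Baire_one h /\ forall x, p.1.1 x - p.2 <= h x <= p.1.2 x.
  move=> [[lo up] d]; have [[lo_up d0]|nH] := pselect (insertable lo up /\ 0 < d).
    by have [h] := approx_ins _ _ _ lo_up d0; exists h.
  by exists (fun=> 0) => lo_up d0; exfalso; apply: nH.
pose insert lo up d := ins (lo, up, d).
have insertP lo up d : insertable lo up -> 0 < d ->
  Baire_one (insert lo up d) /\ forall x, lo x - d <= insert lo up d x <= up x.
  exact: (insP (lo, up, d)).
exists (limit insert g f); split; first exact: limit_Baire_one _ insertP _ _ gf.
by move=> x; exact: limit_between _ insertP _ _ gf 0%N x.
Qed.

Theorem corollary3 (X : topologicalType) (R : realType)
  (hLam : forall A : set X, Lambda_set A -> Gdelta A)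
  (hsep : forall G0 G1 : set X, Gdelta G0 -> Gdelta G1 -> G0 `&` G1 = set0 ->
     exists F0 F1 : set X, [/\ Fsigma F0, Fsigma F1, G0 `<=` F0, G1 `<=` F1
                              & F0 `&` F1 = set0])
  (g f : X -> R)
  (hf : lower_semi_Baire_one f) (hg : upper_semi_Baire_one g)
  (hgf : forall x, g x <= f x) :
  exists h : X -> R, Baire_one h /\ (forall x, g x <= h x /\ h x <= f x).
Proof.
have [|h [hB ghf]] := exact_insertion _ g f (And3 hg hf hgf).
  move=> lo up d [loU upL lo_up] d0.
  exact: approximate_insertion hsep _ _ _ loU upL lo_up d0.
by exists h; split=> // x; exact/andP.
Qed.
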